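(* Let $(\mathfrak{g},[\cdot,\ldots,\cdot],\varepsilon)$ be an $n$-Lie color algebra, $(M,\rho)$ a representation of it, $\alpha:\mathfrak{g}\to\mathfrak{g}$ an algebra morphism (of degree zero, with $\alpha([x_1,\ldots,x_n])=[\alpha(x_1),\ldots,\alpha(x_n)]$) and $\mu:M\to M$ a linear map of degree zero such that $\rho(\tilde\alpha(X))\circ\mu=\mu\circ\rho(X)$ for all $X\in\bigwedge^{n-1}\mathfrak{g}$. Then $(M,\mu\circ\rho,\mu)$ is a representation of the multiplicative $n$-Hom-Lie color algebra $(\mathfrak{g},[\cdot,\ldots,\cdot]_\alpha,\varepsilon,\alpha)$, where $[\cdot,\ldots,\cdot]_\alpha=\alpha\circ[\cdot,\ldots,\cdot]$.
   Context: $\mathbb{K}$ is a field of characteristic zero and $\Gamma$ an abelian group. A bicharacter is a map $\varepsilon:\Gamma\times\Gamma\to\mathbb{K}\setminus\{0\}$ with $\varepsilon(a,b)\varepsilon(b,a)=1$, $\varepsilon(a,b+c)=\varepsilon(a,b)\varepsilon(a,c)$, $\varepsilon(a+b,c)=\varepsilon(a,c)\varepsilon(b,c)$. For homogeneous $x,y$, $\varepsilon(x,y)=\varepsilon(|x|,|y|)$ and $\varepsilon(x,y_1+\dots+y_k)=\varepsilon(|x|,|y_1|+\dots+|y_k|)$ ($=1$ for an empty sum); for $X=(x_1,\ldots,x_{n-1})$, $\varepsilon(X,\cdot)$ uses the total degree. An $n$-Hom-Lie color algebra $(\mathfrak{g},[\cdot,\ldots,\cdot],\varepsilon,\alpha)$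 is a $\Gamma$-graded vector space with an $n$-linear bracket of degree zero, a bicharacter $\varepsilon$ and a degree-zero linear map $\alpha$ such that for homogeneous elements: (i) $[x_1,\ldots,x_i,x_{i+1},\ldots,x_n]=-\varepsilon(x_i,x_{i+1})[x_1,\ldots,x_{i+1},x_i,\ldots,x_n]$; (ii) $[\alpha(x_1),\ldots,\alpha(x_{n-1}),[y_1,\ldots,y_n]]=\sum_{i=1}^n\varepsilon(x_1+\dots+x_{n-1},y_1+\dots+y_{i-1})[\alpha(y_1),\ldots,\alpha(y_{i-1}),[x_1,\ldots,x_{n-1},y_i],\alpha(y_{i+1}),\ldots,\alpha(y_n)]$; it is multiplicative if $\alpha$ commutes with the bracket; an $n$-Lie color algebra is the case $\alpha=\mathrm{id}$. $\bigwedge^{n-1}\mathfrak{g}$ is the $\varepsilon$-exterior power; $\tilde\alpha(x_1\wedge\dots\wedge x_{n-1})=\alpha(x_1)\wedge\dots\wedge\alpha(x_{n-1})$, $\mathrm{ad}_X(y)=[x_1,\ldots,x_{n-1},y]$. A representation $(M,\rho,\mu)$ of an $n$-Hom-Lie color algebra is a $\Gamma$-graded space $M$, an $\varepsilon$-skew-symmetric degree-zero linear map $\rho:\bigwedge^{n-1}\mathfrak{g}\to\mathrm{End}(M)$ and a degree-zero linear $\mu:M\to M$ such that for homogeneous $X=(x_1,\ldots,x_{n-1})$, $Y=(y_1,\ldots,y_{n-1})$, $x_n$, and $y_1,\ldots,y_{n-2}$: (a) $\rho(\tilde\alpha(X))\circ\mu=\mu\circ\rho(X)$; (b) $\rho(\tilde\alpha(X))\rho(Y)-\varepsilon(X,Y)\rho(\tilde\alpha(Y))\rho(X)=\sum_{i=1}^{n-1}\varepsilon(X,y_1+\dots+y_{i-1})\rho(\alpha(y_1),\ldots,\alpha(y_{i-1}),\mathrm{ad}_X(y_i),\alpha(y_{i+1}),\ldots,\alpha(y_{n-1}))\circ\mu$;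 (c) $\rho([x_1,\ldots,x_n],\alpha(y_1),\ldots,\alpha(y_{n-2}))\circ\mu=\sum_{i=1}^n(-1)^{n-i}\varepsilon(x_i,x_{i+1}+\dots+x_n)\rho(\alpha(x_1),\ldots,\widehat{x_i},\ldots,\alpha(x_n))\circ\rho(x_i,y_1,\ldots,y_{n-2})$. A representation $(M,\rho)$ of an $n$-Lie color algebra is the case $\alpha=\mathrm{id}_{\mathfrak{g}}$, $\mu=\mathrm{id}_M$. *)

From HB Require Import structures.
From mathcomp Require Import all_boot all_order all_algebra.
Set Implicit Arguments. Unset Strict Implicit. Unset Printing Implicit Defensive.
Import Order.TTheory GRing.Theory Num.Theory.
Local Open Scope ring_scope.

Section ColorDefs.
Variables (K : fieldType) (G : zmodType).

Definition char0 := [pchar K] =i pred0.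

Definition bichar (eps : G -> G -> K) :=
  [/\ forall a b, eps a b != 0,
      forall a b, eps a b * eps b a = 1,
      forall a b c, eps a (b + c) = eps a b * eps a c &
      forall a b c, eps (a + b) c = eps a c * eps b c].

(* G-graded vector space: V = (+)_a V_a, where hom a is the subspace V_a *)
Definition graded (V : lmodType K) (hom : G -> V -> Prop) :=
  [/\ forall a, hom a 0,
      forall a (k : K) u v, hom a u -> hom a v -> hom a (k *: u + v),
      forall v : V, exists (s : seq G) (f : G -> V),
          (forall a, hom a (f a)) /\ v = \sum_(a <- s) f a &
      forall (s : seq G) (f : G -> V), uniq s -> (forall a, hom a (f a)) ->
          \sum_(a <- s) f a = 0 -> forall a, a \in s -> f a = 0].

Definition is_lin (U V : lmodType K) (f : U -> V) :=
  forall (k : K) u v, f (k *: u + v) = k *: f u + f v.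

Definition deg0 (U V : lmodType K) (homU : G -> U -> Prop) (homV : G -> V -> Prop)
  (f : U -> V) := forall a u, homU a u -> homV a (f u).

Definition upd (V : Type) k (x : {ffun 'I_k -> V}) (i : 'I_k) (v : V) : {ffun 'I_k -> V} :=
  [ffun j => if j == i then v else x j].
Definition swp (V : Type) k (x : {ffun 'I_k -> V}) (i j : 'I_k) : {ffun 'I_k -> V} :=
  [ffun l => if l == i then x j else if l == j then x i else x l].
Definition fmap (V : Type) k (f : V -> V) (x : {ffun 'I_k -> V}) : {ffun 'I_k -> V} :=
  [ffun j => f (x j)].
Definition snoc (V : Type) k (x : {ffun 'I_k -> V}) (z : V) : {ffun 'I_k.+1 -> V} :=
  [ffun j => match unlift ord_max j with Some l => x l | None => z end].
Definition cons0 (V : Type) k (z : V) (y : {ffun 'I_k -> V}) : {ffun 'I_k.+1 -> V} :=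
  [ffun j => match unlift ord0 j with Some l => y l | None => z end].
Definition omit (V : Type) k (x : {ffun 'I_k.+1 -> V}) (i : 'I_k.+1) : {ffun 'I_k -> V} :=
  [ffun l => x (lift i l)].

Definition homt (V : Type) k (hom : G -> V -> Prop) (d : 'I_k -> G) (x : {ffun 'I_k -> V}) :=
  forall i, hom (d i) (x i).

Definition multilin (V W : lmodType K) k (f : {ffun 'I_k -> V} -> W) :=
  forall x i (a : K) u v, f (upd x i (a *: u + v)) = a *: f (upd x i u) + f (upd x i v).

(* n-Hom-Lie color algebra, n = m.+2 *)
Definition nHomLieColor (g : lmodType K) (hom : G -> g -> Prop) (m : nat)
  (br : {ffun 'I_m.+2 -> g} -> g) (eps : G -> G -> K) (alpha : g -> g) :=
  (graded hom) /\
  (bichar eps) /\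
  (multilin br) /\
  (forall d x, homt hom d x -> hom (\sum_i d i) (br x)) /\
  (is_lin alpha /\ deg0 hom hom alpha) /\
  (
      forall d x (i j : 'I_m.+2), homt hom d x -> val j = (val i).+1 ->
        br x = - eps (d i) (d j) *: br (swp x i j)) /\
  (
      forall (dx : 'I_m.+1 -> G) (x : {ffun 'I_m.+1 -> g}) (dy : 'I_m.+2 -> G)
             (y : {ffun 'I_m.+2 -> g}), homt hom dx x -> homt hom dy y ->
        br (snoc (fmap alpha x) (br y)) =
        \sum_(i < m.+2) eps (\sum_k dx k) (\sum_(j < m.+2 | (j < i)%N) dy j) *:
             br (upd (fmap alpha y) i (br (snoc x (y i))))).

Definition mult_hom (g : lmodType K) (m : nat)
  (br : {ffun 'I_m.+2 -> g} -> g) (alpha : g -> g) :=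
  forall x, alpha (br x) = br (fmap alpha x).

Definition nLieColor (g : lmodType K) (hom : G -> g -> Prop) (m : nat)
  (br : {ffun 'I_m.+2 -> g} -> g) (eps : G -> G -> K) :=
  nHomLieColor hom br eps id.

(* representation (M, rho, mu) of the n-Hom-Lie color algebra (g, br, eps, alpha);
   rho : /\^{n-1} g -> End(M) is given as an (n-1)-multilinear,
   eps-skew-symmetric map *)
Definition hrep (g : lmodType K) (hom : G -> g -> Prop) (m : nat)
  (br : {ffun 'I_m.+2 -> g} -> g) (eps : G -> G -> K) (alpha : g -> g)
  (M : lmodType K) (homM : G -> M -> Prop)
  (rho : {ffun 'I_m.+1 -> g} -> M -> M) (mu : M -> M) :=
  (graded homM) /\
  ((forall X, is_lin (rho X)) /\ (forall w, multilin (fun X => rho X w))) /\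
  (forall d X b w, homt hom d X -> homM b w -> homM (\sum_i d i + b) (rho X w)) /\
  (forall d X (i j : 'I_m.+1) w, homt hom d X -> val j = (val i).+1 ->
        rho X w = - eps (d i) (d j) *: rho (swp X i j) w) /\
  (is_lin mu /\ deg0 homM homM mu) /\
  (
      forall d X w, homt hom d X -> rho (fmap alpha X) (mu w) = mu (rho X w)) /\
  (
      forall dX X dY Y w, homt hom dX X -> homt hom dY Y ->
        rho (fmap alpha X) (rho Y w)
          - eps (\sum_k dX k) (\sum_k dY k) *: rho (fmap alpha Y) (rho X w) =
        \sum_(i < m.+1) eps (\sum_k dX k) (\sum_(j < m.+1 | (j < i)%N) dY j) *:
            rho (upd (fmap alpha Y) i (br (snoc X (Y i)))) (mu w)) /\
  (
      forall (dx : 'I_m.+2 -> G) (x : {ffun 'I_m.+2 -> g}) (dy : 'I_m -> G)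
             (y : {ffun 'I_m -> g}) w, homt hom dx x -> homt hom dy y ->
        rho (cons0 (br x) (fmap alpha y)) (mu w) =
        \sum_(i < m.+2) ((-1) ^+ (m.+1 - i) *
                          eps (dx i) (\sum_(j < m.+2 | (i < j)%N) dx j)) *:
            rho (fmap alpha (omit x i)) (rho (cons0 (x i) y) w)).

Definition rep (g : lmodType K) (hom : G -> g -> Prop) (m : nat)
  (br : {ffun 'I_m.+2 -> g} -> g) (eps : G -> G -> K)
  (M : lmodType K) (homM : G -> M -> Prop) (rho : {ffun 'I_m.+1 -> g} -> M -> M) :=
  hrep hom br eps id homM rho id.

End ColorDefs.

(* Yau twisting: with [alpha o br] as bracket and [mu o rho] as action, every axiom to be
   checked is the image under a power of alpha (resp. mu) of the corresponding untwisted
   axiom.  The powers are moved outside the tuples by multiplicativity of alpha (resp. by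
   rho (alpha X) o mu = mu o rho X) and past the linear combinations by linearity. *)
From HB Require Import structures.
From mathcomp Require Import all_boot all_order all_algebra.
Import Order.TTheory GRing.Theory Num.Theory.
Local Open Scope ring_scope.

Set Implicit Arguments.

Section IsLin.
Variables (K : fieldType) (U V : lmodType K) (f : U -> V).
Hypothesis f_lin : is_lin f.

Lemma is_lin0 : f 0 = 0.
Proof.
have := f_lin 1 0 0; rewrite scaler0 add0r scale1r => f0.
by apply: (@addrI _ (f 0)); rewrite addr0 -f0.
Qed.

Lemma is_linZ k u : f (k *: u) = k *: f u.
Proof. by have := f_lin k u 0; rewrite !addr0 is_lin0 addr0. Qed.

Lemma is_linD u v : f (u + v) = f u + f v.
Proof. by have := f_lin 1 u v; rewrite !scale1r. Qed.

Lemma is_linB u v : f (u - v) = f u - f v.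
Proof. by rewrite is_linD -scaleN1r is_linZ scaleN1r. Qed.

Lemma is_lin_sum n (P : pred 'I_n) (F : 'I_n -> U) :
  f (\sum_(i < n | P i) F i) = \sum_(i < n | P i) f (F i).
Proof. exact: (big_morph f is_linD is_lin0). Qed.

Lemma is_lin_sumZ n (P : pred 'I_n) (c : 'I_n -> K) (F : 'I_n -> U) :
  f (\sum_(i < n | P i) c i *: F i) = \sum_(i < n | P i) c i *: f (F i).
Proof. by rewrite is_lin_sum; apply: eq_bigr => i _; rewrite is_linZ. Qed.

End IsLin.

Lemma is_lin_comp (K : fieldType) (U V W : lmodType K) (f : V -> W) (h : U -> V) :
  is_lin f -> is_lin h -> is_lin (fun u => f (h u)).
Proof. by move=> f_lin h_lin k u v; rewrite h_lin f_lin. Qed.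

Lemma multilin_comp (K : fieldType) (V W : lmodType K) k (f : W -> W)
    (F : {ffun 'I_k -> V} -> W) :
  is_lin f -> multilin F -> multilin (fun x => f (F x)).
Proof. by move=> f_lin F_ml x i a u v; rewrite F_ml f_lin. Qed.

Section TupleMap.
Variables (V : Type) (f : V -> V).

Lemma fmap_id k (x : {ffun 'I_k -> V}) : fmap id x = x.
Proof. by apply/ffunP => i; rewrite ffunE. Qed.

Lemma snoc_fmap k (x : {ffun 'I_k -> V}) z : snoc (fmap f x) (f z) = fmap f (snoc x z).
Proof. by apply/ffunP => i; rewrite !ffunE; case: unliftP => [j|] _; rewrite ?ffunE. Qed.

Lemma cons0_fmap k (y : {ffun 'I_k -> V}) z : cons0 (f z) (fmap f y) = fmap f (cons0 z y).
Proof. by apply/ffunP => i; rewrite !ffunE; case: unliftP => [j|] _; rewrite ?ffunE. Qed.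

Lemma upd_fmap k (y : {ffun 'I_k -> V}) i z : upd (fmap f y) i (f z) = fmap f (upd y i z).
Proof. by apply/ffunP => j; rewrite !ffunE; case: (j == i); rewrite ?ffunE. Qed.

End TupleMap.

Section YauTwist.
Variables (K : fieldType) (G : zmodType) (m : nat) (g : lmodType K) (hom : G -> g -> Prop).
Variables (br : {ffun 'I_m.+2 -> g} -> g) (eps : G -> G -> K) (alpha : g -> g).
Hypotheses (alpha_lin : is_lin alpha) (alpha_deg0 : deg0 hom hom alpha).
Hypothesis alpha_mult : mult_hom br alpha.

Local Notation br_alpha := (fun x => alpha (br x)).

Lemma mult_hom_twist : mult_hom br_alpha alpha.
Proof. by move=> x; rewrite /= alpha_mult. Qed.

Lemma nHomLieColor_twist : nLieColor hom br eps -> nHomLieColor hom br_alpha eps alpha.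
Proof.
case=> [g_gr [eps_bichar [br_ml [br_deg [_ [br_skew br_jacobi]]]]]].
split=> //; split=> //; split; first exact: multilin_comp.
split; first by move=> d x x_hom; apply/alpha_deg0/br_deg.
split=> //; split; first by move=> d x i j x_hom ij; rewrite /= (br_skew d x i j) // is_linZ.
move=> dx x dy y x_hom y_hom; rewrite /= snoc_fmap -alpha_mult.
under eq_bigr => i _ do rewrite upd_fmap -alpha_mult.
have := br_jacobi dx x dy y x_hom y_hom; rewrite !fmap_id => ->.
by rewrite !(is_lin_sumZ alpha_lin).
Qed.

Variables (M : lmodType K) (homM : G -> M -> Prop) (rho : {ffun 'I_m.+1 -> g} -> M -> M).
Variable mu : M -> M.
Hypotheses (mu_lin : is_lin mu) (mu_deg0 : deg0 homM homM mu).
Hypothesis rho_mu : forall X w, rho (fmap alpha X) (mu w) = mu (rho X w).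

Local Notation mu_rho := (fun X w => mu (rho X w)).

Lemma hrep_twist : rep hom br eps homM rho -> hrep hom br_alpha eps alpha homM mu_rho mu.
Proof.
case=> [M_gr [[rho_lin rho_ml] [rho_deg [rho_skew [_ [_ [rho_b rho_c]]]]]]].
split=> //; split; first by split=> [X | w]; [apply: is_lin_comp | apply: multilin_comp].
split; first by move=> d X b w X_hom w_hom; apply/mu_deg0/rho_deg.
split; first by move=> d X i j w X_hom ij; rewrite /= (rho_skew d X i j) // is_linZ.
split=> //; split; first by move=> d X w _; rewrite /= rho_mu.
split=> [dX X dY Y w X_hom Y_hom | dx x dy y w x_hom y_hom].
- rewrite !rho_mu; do 2 rewrite -[in LHS](is_linZ mu_lin) -(is_linB mu_lin).
  have := rho_b dX X dY Y w X_hom Y_hom; rewrite !fmap_id => ->.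
  rewrite !(is_lin_sumZ mu_lin); apply: eq_bigr => i _.
  by rewrite upd_fmap rho_mu.
- rewrite /= cons0_fmap rho_mu.
  have := rho_c dx x dy y w x_hom y_hom; rewrite !fmap_id => ->.
  rewrite !(is_lin_sumZ mu_lin); apply: eq_bigr => i _.
  by rewrite rho_mu fmap_id.
Qed.

End YauTwist.

Theorem proposition3p14 (K : fieldType) (G : zmodType) (m : nat)
  (g : lmodType K) (hom : G -> g -> Prop) (br : {ffun 'I_m.+2 -> g} -> g)
  (eps : G -> G -> K) (M : lmodType K) (homM : G -> M -> Prop)
  (rho : {ffun 'I_m.+1 -> g} -> M -> M) (alpha : g -> g) (mu : M -> M) :
  char0 K ->
  nLieColor hom br eps ->
  rep hom br eps homM rho ->
  is_lin alpha -> deg0 hom hom alpha -> mult_hom br alpha ->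
  is_lin mu -> deg0 homM homM mu ->
  (forall X w, rho (fmap alpha X) (mu w) = mu (rho X w)) ->
  [/\ nHomLieColor hom (fun x => alpha (br x)) eps alpha,
      mult_hom (fun x => alpha (br x)) alpha &
      hrep hom (fun x => alpha (br x)) eps alpha homM (fun X w => mu (rho X w)) mu].
Proof.
move=> _ g_lie M_rep alpha_lin alpha_deg0 alpha_mult mu_lin mu_deg0 rho_mu.
split; first exact: nHomLieColor_twist.
- exact: mult_hom_twist.
- exact: hrep_twist.
Qed.
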